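(* Let $G$ be a graph of order $n$. If $\alpha(G)\ge n-F(D_n)$, then $G$ is Diophantine.
   Context: A graph $G$ with $n$ vertices is Diophantine if there is a bijection $f:V(G)\to\{1,\dots,n\}$ with $\gcd(f(u),f(v))\mid n$ for every edge $uv$. $D_n$ is the graph on $\{1,\dots,n\}$ with distinct $a,b$ adjacent iff $\gcd(a,b)\mid n$ (the maximal Diophantine graph of order $n$). $\alpha(G)$ is the independence number of $G$, and $F(D_n)$ is the number of vertices of degree $n-1$ in $D_n$. *)

From mathcomp Require Import all_boot.
Set Implicit Arguments. Unset Strict Implicit. Unset Printing Implicit Defensive.

(* A (simple) graph on the finite vertex type T is given by an adjacency
   relation e : rel T, assumed symmetric and irreflexive where used.
   Its order is #|T|. *)

Definition independent (T : finType) (e : rel T) (S : {set T}) : bool :=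
  [forall x in S, forall y in S, ~~ e x y].

Definition indep_number (T : finType) (e : rel T) : nat :=
  \max_(S : {set T} | independent e S) #|S|.

(* G is Diophantine: there is a bijection f : V(G) -> {1,...,n}, here
   encoded as a bijection g : T -> 'I_n with f x = (g x).+1, such that
   gcd(f u, f v) divides n for every edge uv. *)
Definition diophantine (T : finType) (e : rel T) : Prop :=
  exists g : T -> 'I_#|T|, bijective g /\
    forall u v, e u v -> gcdn (g u).+1 (g v).+1 %| #|T|.

(* D_n : vertices {1..n} (encoded as i : 'I_n standing for i.+1), distinct a b
   adjacent iff gcd(a,b) | n. *)
Definition Dn_adj (n : nat) : rel 'I_n :=
  fun a b => (a != b) && (gcdn a.+1 b.+1 %| n).

(* F(D_n): number of vertices of degree n-1 in D_n, i.e. adjacent to every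
   other vertex. *)
Definition F_Dn (n : nat) : nat :=
  #|[set a : 'I_n | [forall b : 'I_n, (b != a) ==> Dn_adj b a]]|.

From mathcomp Require Import all_boot.

Set Implicit Arguments.
Unset Strict Implicit.
Unset Printing Implicit Defensive.

(* Take a maximum independent set S.  Every edge has an endpoint outside S,
   and the hypothesis says there are at most F(D_n) vertices outside S, so a
   labelling can send all of them to full-degree vertices of D_n, i.e. to
   labels whose gcd with every other label divides n. *)

Lemma exists_bij_subset (A B : finType) (X : {set A}) (Y : {set B}) :
  #|A| = #|B| -> #|X| <= #|Y| ->
  exists2 g : A -> B, bijective g & {in X, forall x, g x \in Y}.
Proof.
move=> AB XY.
(* Match position by position: X then its complement, against Y then its complement. *)
pose sA := enum X ++ enum (~: X).
pose sB := enum Y ++ enum (~: Y).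
have sizeA : size sA = #|A| by rewrite size_cat -!cardE cardsC.
have sizeB : size sB = #|B| by rewrite size_cat -!cardE cardsC.
have mem_sA x : x \in sA by rewrite mem_cat !mem_enum in_setC orbN.
have uniq_sB : uniq sB.
  by rewrite cat_uniq !enum_uniq andbT /=; apply/hasPn => y; rewrite !mem_enum in_setC.
have index_lt x : index x sA < size sB by rewrite sizeB -AB -sizeA index_mem.
pose dflt x := enum_val (cast_ord AB (enum_rank x)).
exists (fun x => nth (dflt x) sB (index x sA)).
  apply: inj_card_bij; last by rewrite AB.
  move=> x y /eqP; rewrite (set_nth_default (dflt x) (dflt y)) // nth_uniq //.
  by move=> /eqP eq_index; rewrite -(nth_index x (mem_sA x)) eq_index nth_index.
move=> x xX; rewrite index_cat mem_enum xX nth_cat.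
have lt_index : index x (enum X) < size (enum Y).
  by rewrite -cardE (leq_trans _ XY) // cardE index_mem mem_enum.
by rewrite lt_index -(mem_enum (mem Y)) mem_nth.
Qed.

Section Independence.

Variables (T : finType) (e : rel T).

Lemma indep_number_attained :
  exists2 S : {set T}, independent e S & #|S| = indep_number e.
Proof.
have indep0 : independent e set0 by apply/forall_inP => x; rewrite inE.
have [S indS attained] := @eq_bigmax_cond _ [pred S : {set T} | independent e S]
  (fun S => #|S|) (ltac:(by apply/card_gt0P; exists set0)).
by exists S; rewrite // /indep_number attained.
Qed.

Lemma independent_edge (S : {set T}) u v :
  independent e S -> e u v -> (u \notin S) || (v \notin S).
Proof.
move=> /forall_inP indS euv; rewrite -negb_and; apply/andP => -[uS vS].
by move: (indS u uS) => /forall_inP /(_ v vS); rewrite euv.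
Qed.

End Independence.

Definition Dn_full (n : nat) : {set 'I_n} :=
  [set a | [forall b, (b != a) ==> Dn_adj b a]].

Lemma card_Dn_full n : #|Dn_full n| = F_Dn n.
Proof. by []. Qed.

Lemma Dn_full_gcd n (a b : 'I_n) :
  a \in Dn_full n -> a != b -> gcdn a.+1 b.+1 %| n.
Proof.
rewrite inE => /forallP /(_ b) full_a ab.
by move: full_a; rewrite eq_sym ab /= /Dn_adj eq_sym ab gcdnC.
Qed.

Lemma diophantine_of_full_cover (T : finType) (e : rel T) (g : T -> 'I_#|T|) :
  irreflexive e -> bijective g ->
  (forall u v, e u v -> (g u \in Dn_full #|T|) || (g v \in Dn_full #|T|)) ->
  diophantine e.
Proof.
move=> e_irr g_bij cover; exists g; split => // u v euv.
have g_neq : g u != g v.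
  by apply: contraTneq euv => /(bij_inj g_bij) ->; rewrite e_irr.
have /orP [uF | vF] := cover u v euv; first exact: Dn_full_gcd.
by rewrite gcdnC; apply: Dn_full_gcd; rewrite // eq_sym.
Qed.

Theorem mainTheorem13 (T : finType) (e : rel T)
  (e_sym : symmetric e) (e_irr : irreflexive e) :
  #|T| - F_Dn #|T| <= indep_number e -> diophantine e.
Proof.
move=> alpha_large.
have [S indS cardS] := indep_number_attained e.
have card_notS : #|~: S| <= #|Dn_full #|T| |.
  by rewrite cardsCs setCK card_Dn_full leq_subLR addnC -leq_subLR cardS.
have [g g_bij g_notS] := exists_bij_subset (esym (card_ord #|T|)) card_notS.
apply: (diophantine_of_full_cover e_irr g_bij) => u v euv.
have /orP [uS | vS] := independent_edge indS euv.
  by rewrite g_notS ?inE.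
by rewrite orbC g_notS ?inE.
Qed.
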